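(* In the model and protocol $\mathrm{OciorABA}^*$ described in the context, with $n\ge 3t+1$, if every honest node receives an input message, then every honest node eventually outputs a value and terminates.
   Context: Model: there are $n$ nodes $\mathrm{Node}_1,\dots,\mathrm{Node}_n$ in an asynchronous network (every message sent between honest nodes is eventually delivered, with arbitrary adversarial delay). An adaptive adversary may corrupt (make dishonest/Byzantine) at most $t$ nodes in total; $\mathcal F\subseteq[1:n]$ denotes the set of dishonest nodes; $n\ge 3t+1$. Primitives used as black boxes: (RBC) For each $j\in[1:n]$ there is a reliable broadcast instance $\mathrm{RBC}_j$ with leader $\mathrm{Node}_j$, satisfying: Consistency (if two honest nodes output $w',w''$ then $w'=w''$); Validity (if the leader is honest and inputs $w$, every honest node eventually outputs $w$); Totality (if one honest node outputs a value, every honest node eventually outputs a value). (ABBA) For each $j\in[1:n]$ there is a binary Byzantine agreement instance $\mathrm{ABBA}_j$ (inputs and outputs in $\{0,1\}$), satisfying: Termination (if all honest nodes provide inputs, every honest node eventually outputs a value and terminates); Consistency (if an honest node outputs $b$, every honest node eventually outputs $b$); Validity (if all honest nodes input the same $b$, every honest node eventually outputs $b$). (Erasure code) An $(n,t+1)$ erasure code over an alphabet $\Sigma$: an encoder $\mathrm{Enc}$ mapping a message $w$ to $(\mathrm{Enc}_1(w),\dots,\mathrm{Enc}_n(w))\in\Sigma^n$ and a decoder $\mathrm{Dec}$ such that for every set $K\subseteq[1:n]$ with $|K|=t+1$, $\mathrm{Dec}(\{\mathrm{Enc}_j(w)\}_{j\in K})=w$. Protocol $\mathrm{OciorABA}^*$,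 code for an honest $\mathrm{Node}_i$ with input message $w_i$: (1) Compute $(y^{(i)}_1,\dots,y^{(i)}_n)=\mathrm{Enc}(w_i)$ and input $y^{(i)}_i$ into $\mathrm{RBC}_i$ (as leader). (2) Upon delivery of a value $y^{(j)}_j$ from $\mathrm{RBC}_j$ (after step (1) has been executed), if $\mathrm{Node}_i$ has not yet given an input to $\mathrm{ABBA}_j$: set $a_i[j]=1$ if $y^{(j)}_j=y^{(i)}_j$ and $a_i[j]=0$ otherwise, and input $a_i[j]$ into $\mathrm{ABBA}_j$. (3) Upon obtaining outputs from $n-t$ of the instances $\mathrm{ABBA}_1,\dots,\mathrm{ABBA}_n$, input $0$ into every $\mathrm{ABBA}_j$ to which $\mathrm{Node}_i$ has not yet given an input. (4) Upon obtaining outputs from all $n$ ABBA instances: let $S=\{j:\mathrm{ABBA}_j\text{ output }1\}$. If $|S|<t+1$, output a default value $\bot$ and terminate. Otherwise let $K$ be the set of the $t+1$ smallest elements of $S$, wait for delivery of $y^{(j)}_j$ from $\mathrm{RBC}_j$ for all $j\in K$, output $\mathrm{Dec}(\{y^{(j)}_j\}_{j\in K})$ and terminate. *)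

From mathcomp Require Import all_boot.
Set Implicit Arguments. Unset Strict Implicit. Unset Printing Implicit Defensive.

(* Nodes are 'I_n.  Time is nat (a global, adversarially scheduled clock).
   An event is recorded as [Some (time, value)], or [None] if it never happens. *)
Record exec (n : nat) (M Sig : Type) := Exec {
  rbc_in   : 'I_n -> option (nat * Sig);          (* input of Node_j as leader into RBC_j *)
  rbc_out  : 'I_n -> 'I_n -> option (nat * Sig);  (* rbc_out i j : delivery at Node_i from RBC_j *)
  abba_in  : 'I_n -> 'I_n -> option (nat * bool); (* abba_in i j : input of Node_i into ABBA_j *)
  abba_out : 'I_n -> 'I_n -> option (nat * bool); (* abba_out i j : output of ABBA_j at Node_i *)
  output   : 'I_n -> option (nat * option M)      (* final output (None = default value ⊥) and
                                                     time of output = termination *)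
}.

Section Specs.
Variables (n : nat) (M : Type) (Sig : eqType).
Implicit Types (e : exec n M Sig) (H : {set 'I_n}).

Definition rbc_spec H e : Prop :=
  (forall j i i' tk tk' v v', i \in H -> i' \in H ->
      rbc_out e i j = Some (tk, v) -> rbc_out e i' j = Some (tk', v') -> v = v')
  /\ (forall j tk v, j \in H -> rbc_in e j = Some (tk, v) ->
      forall i, i \in H -> exists tk', rbc_out e i j = Some (tk', v))
  /\ (forall j i, i \in H -> rbc_out e i j <> None ->
      forall i', i' \in H -> rbc_out e i' j <> None).

Definition abba_spec H e : Prop :=
  (forall j, (forall i, i \in H -> abba_in e i j <> None) ->
      forall i, i \in H -> abba_out e i j <> None)
  /\ (forall j i tk b, i \in H -> abba_out e i j = Some (tk, b) ->
      forall i', i' \in H -> exists tk', abba_out e i' j = Some (tk', b))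
  /\ (forall j b, (forall i, i \in H -> exists tk, abba_in e i j = Some (tk, b)) ->
      forall i, i \in H -> exists tk, abba_out e i j = Some (tk, b)).

Definition erasure_code (t : nat) (Enc : M -> 'I_n -> Sig)
    (Dec : {set 'I_n} -> ('I_n -> option Sig) -> M) : Prop :=
  forall (K : {set 'I_n}) (w : M) (f : 'I_n -> option Sig),
    #|K| = t.+1 -> (forall j, j \in K -> f j = Some (Enc w j)) -> Dec K f = w.

Definition ev_by {A : Type} (o : option (nat * A)) (T : nat) : bool :=
  if o is Some (tk, _) then tk <= T else false.

Definition ev_time {A : Type} (o : option (nat * A)) : nat :=
  if o is Some (tk, _) then tk else 0.

Definition count_out e (i : 'I_n) (T : nat) : nat :=
  #|[set j | ev_by (abba_out e i j) T]|.

Definition all_out e (i : 'I_n) : bool := [forall j, isSome (abba_out e i j)].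

Definition all_out_time e (i : 'I_n) : nat := \max_j ev_time (abba_out e i j).

Definition one_set e (i : 'I_n) : {set 'I_n} :=
  [set j | if abba_out e i j is Some (_, b) then b else false].

(* the k smallest elements of S (all of S if #|S| <= k) *)
Definition smallest (S : {set 'I_n}) (k : nat) : {set 'I_n} :=
  [set j in S | #|[set l in S | (l < j)%N]| < k].

Definition step4_output (t : nat) (Dec : {set 'I_n} -> ('I_n -> option Sig) -> M)
    e (i : 'I_n) : option (nat * option M) :=
  if all_out e i then
    let S := one_set e i in
    if #|S| < t.+1 then Some (all_out_time e i, None)
    else
      let K := smallest S t.+1 in
      if [forall j in K, isSome (rbc_out e i j)] then
        Some (maxn (all_out_time e i) (\max_(j in K) ev_time (rbc_out e i j)),
              Some (Dec K (fun j => omap snd (rbc_out e i j))))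
      else None
  else None.

Definition honest_run (t : nat) (Enc : M -> 'I_n -> Sig)
    (Dec : {set 'I_n} -> ('I_n -> option Sig) -> M)
    e (i : 'I_n) (w_i : M) (s : nat) : Prop :=
  rbc_in e i = Some (s, Enc w_i i)
  (* step (2): upon delivery (after step (1)), input is given by then *)
  /\ (forall j tk y, rbc_out e i j = Some (tk, y) ->
        exists ta b, abba_in e i j = Some (ta, b) /\ ta <= maxn tk s)
  /\ (forall T, n - t <= count_out e i T ->
        forall j, exists ta b, abba_in e i j = Some (ta, b) /\ ta <= T)
  /\ (forall j ta b, abba_in e i j = Some (ta, b) ->
        (exists tk y, rbc_out e i j = Some (tk, y) /\ ta = maxn tk s
                      /\ b = (y == Enc w_i j))
        \/ (n - t <= count_out e i ta /\ b = false))
  /\ output e i = step4_output t Dec e i.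

End Specs.

(* Termination rests on two observations.  First, every honest node inputs
   into every ABBA instance: the instances led by honest nodes receive inputs
   from all honest nodes through step (2), by validity of their RBC, so they
   all terminate; these n - t outputs trigger step (3) everywhere.  Hence all
   n ABBA instances terminate.  Second, if ABBA_j outputs 1 then RBC_j
   delivers at every honest node: otherwise, by totality, no honest node ever
   sees RBC_j deliver, so all honest inputs to ABBA_j come from step (3) and
   equal 0, and validity forces the output 0.  So the wait in step (4) ends. *)
From mathcomp Require Import all_boot.

Set Implicit Arguments.
Unset Strict Implicit.
Unset Printing Implicit Defensive.

Lemma card_setC_geq (n t : nat) (F : {set 'I_n}) :
  #|F| <= t -> n - t <= #|~: F|.
Proof. by move=> hF; rewrite cardsCs setCK card_ord leq_sub2l. Qed.

Lemma count_out_all_out_time (n : nat) (M : Type) (Sig : eqType)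
    (e : exec n M Sig) (i : 'I_n) (J : {set 'I_n}) :
  (forall j, j \in J -> abba_out e i j <> None) ->
  #|J| <= count_out e i (all_out_time e i).
Proof.
move=> hJ; apply: subset_leq_card; apply/subsetP => j jJ; rewrite inE.
have := @leq_bigmax _ (fun k => ev_time (abba_out e i k)) j.
by move: (hJ j jJ); case: (abba_out e i j) => [[tk b]|].
Qed.

Lemma step4_output_some (n t : nat) (M : Type) (Sig : eqType)
    (Dec : {set 'I_n} -> ('I_n -> option Sig) -> M) (e : exec n M Sig)
    (i : 'I_n) :
  (forall j, abba_out e i j <> None) ->
  (forall j, j \in one_set e i -> rbc_out e i j <> None) ->
  exists tm v, step4_output t Dec e i = Some (tm, v).
Proof.
move=> hout hdeliv; rewrite /step4_output.
have -> : all_out e i by apply/forallP => j; move: (hout j); case: abba_out.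
case: ifP => _; first by do 2 eexists.
have -> : [forall j in smallest (one_set e i) t.+1, isSome (rbc_out e i j)].
  apply/forall_inP => j; rewrite inE => /andP[/hdeliv].
  by case: rbc_out.
by do 2 eexists.
Qed.

Section Termination.

Variables (n t : nat) (M : Type) (Sig : eqType).
Variables (Enc : M -> 'I_n -> Sig) (Dec : {set 'I_n} -> ('I_n -> option Sig) -> M).
Variables (F : {set 'I_n}) (w : 'I_n -> M) (s : 'I_n -> nat) (e : exec n M Sig).

Hypothesis honest_quorum : n - t <= #|~: F|.
Hypothesis rbc : rbc_spec (~: F) e.
Hypothesis abba : abba_spec (~: F) e.
Hypothesis honest : forall i, i \in ~: F -> honest_run t Enc Dec e i (w i) (s i).

Lemma abba_out_honest_leader i j :
  i \in ~: F -> j \in ~: F -> abba_out e i j <> None.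
Proof.
move=> iH jH; apply: abba.1 => // k kH.
have [rbc_input _] := honest jH.
have [tk deliv] := rbc.2.1 j _ _ jH rbc_input k kH.
have [_ [step2 _]] := honest kH.
by have [ta [b [-> _]]] := step2 _ _ _ deliv.
Qed.

Lemma abba_in_honest i j : i \in ~: F -> exists ta b, abba_in e i j = Some (ta, b).
Proof.
move=> iH; have [_ [_ [step3 _]]] := honest iH.
have quorum : n - t <= count_out e i (all_out_time e i).
  apply: leq_trans honest_quorum (count_out_all_out_time _).
  by move=> k; exact: abba_out_honest_leader.
by have [ta [b [-> _]]] := step3 _ quorum j; exists ta, b.
Qed.

Lemma abba_out_honest i j : i \in ~: F -> abba_out e i j <> None.
Proof.
move=> iH; apply: abba.1 => // k kH.
by have [ta [b ->]] := abba_in_honest j kH.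
Qed.

Lemma abba_out_true_rbc_delivered i j tk :
  i \in ~: F -> abba_out e i j = Some (tk, true) -> rbc_out e i j <> None.
Proof.
move=> iH out1 undelivered.
suff [tk' out0] : exists tk', abba_out e i j = Some (tk', false) by rewrite out1 in out0.
apply: abba.2.2 => // k kH.
have [ta [b input]] := abba_in_honest j kH.
have [_ [_ [_ [input_origin _]]]] := honest kH.
case: (input_origin _ _ _ input) => [[tk' [y [deliv _]]] | [_ b0]].
  by case: (rbc.2.2 j k kH _ i iH undelivered); rewrite deliv.
by exists ta; rewrite input b0.
Qed.

Lemma honest_output i : i \in ~: F -> exists tm v, output e i = Some (tm, v).
Proof.
move=> iH; have [_ [_ [_ [_ ->]]]] := honest iH.
apply: step4_output_some => [j|j]; first exact: abba_out_honest.
rewrite inE; case out: (abba_out e i j) => [[tk b]|] // b1.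
by move: out; rewrite b1 => /abba_out_true_rbc_delivered; apply.
Qed.

End Termination.

Theorem theorem1 (n t : nat) (M : Type) (Sig : eqType)
    (Enc : M -> 'I_n -> Sig) (Dec : {set 'I_n} -> ('I_n -> option Sig) -> M)
    (F : {set 'I_n}) (w : 'I_n -> M) (s : 'I_n -> nat) (e : exec n M Sig) :
  3 * t + 1 <= n ->
  erasure_code t Enc Dec ->
  #|F| <= t ->
  rbc_spec (~: F) e ->
  abba_spec (~: F) e ->
  (forall i, i \notin F -> honest_run t Enc Dec e i (w i) (s i)) ->
  forall i, i \notin F -> exists tm v, output e i = Some (tm, v).
Proof.
move=> _ _ hF rbc abba honest i iH.
have honest' k : k \in ~: F -> honest_run t Enc Dec e k (w k) (s k).
  by rewrite inE; exact: honest.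
by apply: (honest_output (card_setC_geq hF) rbc abba honest'); rewrite inE.
Qed.
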